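(* Let $\mathcal{V}$ and $\mathcal{W}$ be quaternionic two-sided Banach algebras with unit $1\neq 0$, let $\mathcal{A}:\mathcal{V}\to\mathcal{W}$ be a homomorphism, and let $a\in\mathcal{V}^{-1}$. Then $$\sigma_{S,\mathcal{A}}^{\Phi}(a^{-1})=\left\{\frac{\overline{q}}{|q|^{2}}:\ q\in \sigma_{S,\mathcal{A}}^{\Phi}(a)\right\}\quad\text{and}\quad \sigma_{S,\mathcal{A}}^{\Phi^{0}}(a^{-1})=\left\{\frac{\overline{q}}{|q|^{2}}:\ q\in \sigma_{S,\mathcal{A}}^{\Phi^{0}}(a)\right\}.$$
   Context: $\mathbb{H}$ denotes the quaternions; $\overline{q}$ is the quaternionic conjugate, $Re(q)$ the real part, $|q|$ the norm. A quaternionic two-sided Banach algebra with unit is a two-sided $\mathbb{H}$-vector space $\mathcal{V}$ with an associative product satisfying $x(y+z)=xy+xz$, $(x+y)z=xz+yz$, $q(xy)=(qx)y$, $(xy)q=x(yq)$, complete with respect to a norm with $\|qx\|=|q|\|x\|=\|xq\|$, $\|xy\|\le\|x\|\|y\|$, and with unit $1_{\mathcal{V}}$, $\|1_{\mathcal{V}}\|=1$. A homomorphism $\mathcal{A}:\mathcal{V}\to\mathcal{W}$ is additive, multiplicative, satisfies $\mathcal{A}(qu)=q\mathcal{A}(u)$, $\mathcal{A}(uq)=\mathcal{A}(u)q$ and $\mathcal{A}(1_{\mathcal{V}})=1_{\mathcal{W}}$. $\mathcal{V}^{-1}$ is the group of invertible elements. For $v\in\mathcal{V}$, $q\in\mathbb{H}$,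 $R_q(v)=v^2-2Re(q)v+|q|^21_{\mathcal{V}}$. $\Phi_{\mathcal{A}}=\{v:\mathcal{A}(v)\in\mathcal{W}^{-1}\}$, $\Phi^0_{\mathcal{A}}=\mathcal{V}^{-1}+\mathcal{A}^{-1}(0)$, $\sigma_{S,\mathcal{A}}^{\Phi}(v)=\{q\in\mathbb{H}:R_q(v)\notin\Phi_{\mathcal{A}}\}$, $\sigma_{S,\mathcal{A}}^{\Phi^0}(v)=\{q\in\mathbb{H}:R_q(v)\notin\Phi^0_{\mathcal{A}}\}$. *)

From HB Require Import structures.
From mathcomp Require Import all_boot all_order all_algebra.
From mathcomp Require Import reals.
Set Implicit Arguments. Unset Strict Implicit. Unset Printing Implicit Defensive.
Import Order.TTheory GRing.Theory Num.Theory.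
Local Open Scope ring_scope.

Record quat (R : realType) := Quat { qr : R; qi : R; qj : R; qk : R }.

Section Quat.
Variable R : realType.
Definition qadd (p q : quat R) : quat R :=
  Quat (qr p + qr q) (qi p + qi q) (qj p + qj q) (qk p + qk q).
Definition qmul (p q : quat R) : quat R :=
  Quat (qr p * qr q - qi p * qi q - qj p * qj q - qk p * qk q)
       (qr p * qi q + qi p * qr q + qj p * qk q - qk p * qj q)
       (qr p * qj q - qi p * qk q + qj p * qr q + qk p * qi q)
       (qr p * qk q + qi p * qj q - qj p * qi q + qk p * qr q).
Definition qreal (r : R) : quat R := Quat r 0 0 0.
Definition qone : quat R := qreal 1.
Definition qconj (q : quat R) : quat R := Quat (qr q) (- qi q) (- qj q) (- qk q).
Definition qRe (q : quat R) : R := qr q.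
Definition qnorm (q : quat R) : R :=
  Num.sqrt (qr q ^+ 2 + qi q ^+ 2 + qj q ^+ 2 + qk q ^+ 2).
Definition qinvpt (q : quat R) : quat R := qmul (qreal ((qnorm q ^+ 2)^-1)) (qconj q).
End Quat.

Record QBanachAlg (R : realType) := {
  car :> Type;
  vzero : car;
  vadd : car -> car -> car;
  vopp : car -> car;
  vmul : car -> car -> car;
  vone : car;
  lsc : quat R -> car -> car;
  rsc : car -> quat R -> car;
  vnorm : car -> R;
  vaddA : forall x y z, vadd x (vadd y z) = vadd (vadd x y) z;
  vaddC : forall x y, vadd x y = vadd y x;
  vadd0 : forall x, vadd x vzero = x;
  vaddN : forall x, vadd x (vopp x) = vzero;
  lscDr : forall q x y, lsc q (vadd x y) = vadd (lsc q x) (lsc q y);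
  lscDl : forall p q x, lsc (qadd p q) x = vadd (lsc p x) (lsc q x);
  lscA : forall p q x, lsc (qmul p q) x = lsc p (lsc q x);
  lsc1 : forall x, lsc (qone R) x = x;
  rscDl : forall q x y, rsc (vadd x y) q = vadd (rsc x q) (rsc y q);
  rscDr : forall p q x, rsc x (qadd p q) = vadd (rsc x p) (rsc x q);
  rscA : forall p q x, rsc x (qmul p q) = rsc (rsc x p) q;
  rsc1 : forall x, rsc x (qone R) = x;
  lrscA : forall p q x, rsc (lsc p x) q = lsc p (rsc x q);
  vmulA : forall x y z, vmul x (vmul y z) = vmul (vmul x y) z;
  vmulDr : forall x y z, vmul x (vadd y z) = vadd (vmul x y) (vmul x z);
  vmulDl : forall x y z, vmul (vadd x y) z = vadd (vmul x z) (vmul y z);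
  lscM : forall q x y, lsc q (vmul x y) = vmul (lsc q x) y;
  rscM : forall q x y, rsc (vmul x y) q = vmul x (rsc y q);
  vmul1l : forall x, vmul vone x = x;
  vmul1r : forall x, vmul x vone = x;
  vnorm_ge0 : forall x, 0 <= vnorm x;
  vnorm_eq0 : forall x, vnorm x = 0 -> x = vzero;
  vnormD : forall x y, vnorm (vadd x y) <= vnorm x + vnorm y;
  vnormZl : forall q x, vnorm (lsc q x) = qnorm q * vnorm x;
  vnormZr : forall q x, vnorm (rsc x q) = qnorm q * vnorm x;
  vnormM : forall x y, vnorm (vmul x y) <= vnorm x * vnorm y;
  vnorm1 : vnorm vone = 1;
  vcomplete : forall u : nat -> car,
    (forall e : R, 0 < e -> exists N, forall m n, (N <= m)%N -> (N <= n)%N ->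
        vnorm (vadd (u m) (vopp (u n))) < e) ->
    exists l, forall e : R, 0 < e -> exists N, forall n, (N <= n)%N ->
        vnorm (vadd (u n) (vopp l)) < e
}.

Arguments vzero {R} _.
Arguments vone {R} _.

Section Defs.
Variable R : realType.

Definition vsub (V : QBanachAlg R) (x y : V) : V := vadd x (vopp y).

Definition invertible (V : QBanachAlg R) (x : V) : Prop :=
  exists y : V, vmul x y = vone V /\ vmul y x = vone V.

Definition is_hom (V W : QBanachAlg R) (A : V -> W) : Prop :=
  (forall x y, A (vadd x y) = vadd (A x) (A y)) /\
  (forall x y, A (vmul x y) = vmul (A x) (A y)) /\
  (forall q x, A (lsc q x) = lsc q (A x)) /\
  (forall q x, A (rsc x q) = rsc (A x) q) /\
  A (vone V) = vone W.

Definition Rq (V : QBanachAlg R) (q : quat R) (v : V) : V :=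
  vadd (vsub (vmul v v) (lsc (qreal (2 * qRe q)) v))
       (lsc (qreal (qnorm q ^+ 2)) (vone V)).

Definition PhiA (V W : QBanachAlg R) (A : V -> W) (v : V) : Prop :=
  invertible (A v).

Definition Phi0A (V W : QBanachAlg R) (A : V -> W) (v : V) : Prop :=
  exists u w : V, invertible u /\ A w = vzero W /\ v = vadd u w.

Definition SspecPhi (V W : QBanachAlg R) (A : V -> W) (v : V) (q : quat R) : Prop :=
  ~ PhiA A (Rq q v).

Definition SspecPhi0 (V W : QBanachAlg R) (A : V -> W) (v : V) (q : quat R) : Prop :=
  ~ Phi0A A (Rq q v).
End Defs.

From mathcomp Require Import all_boot all_order all_algebra reals ring lra.
Import Order.TTheory GRing.Theory Num.Theory.
Local Open Scope ring_scope.

(* For a with inverse b and q <> 0, put q' := conj q / |q|^2 and c := |q|^2.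
   Since a^2 b^2 = 1, 2 Re q' = 2 Re q / c and |q'|^2 = 1 / c, one computes
     R_q'(b) = c^-1 R_q(a) b^2,
   so R_q'(b) and R_q(a) differ by two-sided multiplication with invertible
   elements.  Both Phi_A and Phi^0_A are stable under such multiplications, and
   they contain R_0(x) = x^2 for every invertible x, so 0 lies in neither
   spectrum; as q |-> q' is an involution on nonzero quaternions, the spectra
   of a and b correspond under it. *)

Section QuatFacts.
Context {R : realType}.
Implicit Types (q : quat R) (r s : R).

Definition qsqnorm q : R := qr q ^+ 2 + qi q ^+ 2 + qj q ^+ 2 + qk q ^+ 2.

Lemma qsqnorm_ge0 q : 0 <= qsqnorm q.
Proof.
rewrite /qsqnorm; have := sqr_ge0 (qr q); have := sqr_ge0 (qi q).
have := sqr_ge0 (qj q); have := sqr_ge0 (qk q); lra.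
Qed.

Lemma sqr_qnorm q : qnorm q ^+ 2 = qsqnorm q.
Proof. by rewrite /qnorm sqr_sqrtr // qsqnorm_ge0. Qed.

Lemma qsqnorm_eq0_qRe q : qsqnorm q = 0 -> qRe q = 0.
Proof.
move=> q0; apply/eqP; rewrite -sqrf_eq0; apply/eqP; move: q0.
rewrite /qsqnorm /qRe; have := sqr_ge0 (qr q); have := sqr_ge0 (qi q).
have := sqr_ge0 (qj q); have := sqr_ge0 (qk q); lra.
Qed.

Lemma qsqnorm_qinvpt q : qsqnorm q != 0 -> qsqnorm (qinvpt q) = (qsqnorm q)^-1.
Proof.
by case: q => x y z w; rewrite /qinvpt sqr_qnorm /qsqnorm /= => q0; field.
Qed.

Lemma qinvptK q : qsqnorm q != 0 -> qinvpt (qinvpt q) = q.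
Proof.
move=> q0; rewrite {1}/qinvpt sqr_qnorm qsqnorm_qinvpt // invrK.
by move: q0; case: q => x y z w; rewrite /qinvpt sqr_qnorm /qsqnorm => q0;
  congr Quat => /=; field.
Qed.

Lemma qRe_qinvpt q : qRe (qinvpt q) = (qsqnorm q)^-1 * qRe q.
Proof. by rewrite /qinvpt sqr_qnorm /qRe /=; ring. Qed.

Lemma qadd_real r s : qadd (qreal r) (qreal s) = qreal (r + s).
Proof. by rewrite /qadd /qreal /=; congr Quat; ring. Qed.

Lemma qmul_real r s : qmul (qreal r) (qreal s) = qreal (r * s).
Proof. by rewrite /qmul /qreal /=; congr Quat; ring. Qed.

End QuatFacts.

Section QBanachAlgTheory.
Context {R : realType} {V : QBanachAlg R}.
Implicit Types (x y z a b : V) (q : quat R).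

Lemma vadd0l x : vadd (vzero V) x = x.
Proof. by rewrite vaddC vadd0. Qed.

Lemma vaddI x : injective (vadd x).
Proof.
move=> y z xyz; have : vadd (vopp x) (vadd x y) = vadd (vopp x) (vadd x z).
  by rewrite xyz.
by rewrite !vaddA [vadd (vopp x) x]vaddC vaddN !vadd0l.
Qed.

Lemma vopp_unique x y : vadd x y = vzero V -> y = vopp x.
Proof. by move=> xy; apply: (vaddI x); rewrite xy vaddN. Qed.

Lemma vopp0 : vopp (vzero V) = vzero V.
Proof. by symmetry; apply: vopp_unique; rewrite vadd0. Qed.

Lemma vmulr0 x : vmul x (vzero V) = vzero V.
Proof. by apply: (vaddI (vmul x (vzero V))); rewrite -vmulDr !vadd0. Qed.

Lemma vmul0r x : vmul (vzero V) x = vzero V.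
Proof. by apply: (vaddI (vmul (vzero V) x)); rewrite -vmulDl !vadd0. Qed.

Lemma vmulNl x y : vmul (vopp x) y = vopp (vmul x y).
Proof. by apply: vopp_unique; rewrite -vmulDl vaddN vmul0r. Qed.

Lemma lscr0 q : lsc q (vzero V) = vzero V.
Proof. by apply: (vaddI (lsc q (vzero V))); rewrite -lscDr !vadd0. Qed.

Lemma lscN q x : lsc q (vopp x) = vopp (lsc q x).
Proof. by apply: vopp_unique; rewrite -lscDr vaddN lscr0. Qed.

Lemma lsc0 x : lsc (qreal 0) x = vzero V.
Proof.
by apply: (vaddI (lsc (qreal 0) x)); rewrite -lscDl qadd_real addr0 vadd0.
Qed.

Lemma lscE q x : lsc q x = vmul (lsc q (vone V)) x.
Proof. by rewrite -lscM vmul1l. Qed.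

Lemma invertible_mul x y :
  invertible x -> invertible y -> invertible (vmul x y).
Proof.
move=> [x' [xx' x'x]] [y' [yy' y'y]]; exists (vmul y' x'); split.
  by rewrite -vmulA [vmul y (vmul y' x')]vmulA yy' vmul1l xx'.
by rewrite -vmulA [vmul x' (vmul x y)]vmulA x'x vmul1l y'y.
Qed.

Lemma invertible_lsc_real (r : R) :
  r != 0 -> invertible (lsc (qreal r) (vone V)).
Proof.
move=> r0; exists (lsc (qreal r^-1) (vone V)).
by rewrite -!lscM !vmul1l -!lscA !qmul_real mulfV // mulVf // !lsc1.
Qed.

Lemma Rq_qsqnorm0 q x : qsqnorm q = 0 -> Rq q x = vmul x x.
Proof.
move=> q0; rewrite /Rq /vsub sqr_qnorm q0 qsqnorm_eq0_qRe // mulr0 !lsc0 vopp0.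
by rewrite !vadd0.
Qed.

Lemma Rq_qinvpt a b q : vmul a b = vone V -> qsqnorm q != 0 ->
  Rq (qinvpt q) b = lsc (qreal (qsqnorm q)^-1) (vmul (Rq q a) (vmul b b)).
Proof.
move=> ab q0; set c := qsqnorm q.
have abb : vmul a (vmul b b) = b by rewrite vmulA ab vmul1l.
have aabb : vmul (vmul a a) (vmul b b) = vone V by rewrite -vmulA abb.
have -> : vmul (Rq q a) (vmul b b) =
    vadd (vadd (vone V) (vopp (lsc (qreal (2 * qRe q)) b)))
         (lsc (qreal c) (vmul b b)).
  by rewrite /Rq /vsub !vmulDl vmulNl -!lscM aabb abb vmul1l sqr_qnorm.
rewrite !lscDr lscN -!lscA !qmul_real mulVf // lsc1 mulrCA -qRe_qinvpt.
rewrite /Rq /vsub sqr_qnorm qsqnorm_qinvpt //.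
rewrite [vadd (vadd _ (vopp _)) (vmul b b)]vaddC.
by rewrite [vadd (lsc _ _) _]vaddC vaddA.
Qed.

Definition unit_stable (P : V -> Prop) : Prop :=
  forall x y z, invertible y -> invertible z -> P x -> P (vmul (vmul y x) z).

Section UnitStable.
Variable P : V -> Prop.
Hypothesis stableP : unit_stable P.

Lemma unit_stable_iff x y z :
  invertible y -> invertible z -> P (vmul (vmul y x) z) <-> P x.
Proof.
move=> iy iz; split; last exact: stableP.
have [y' [yy' y'y]] := iy; have [z' [zz' z'z]] := iz.
have iy' : invertible y' by exists y.
have iz' : invertible z' by exists z.
move=> /(stableP _ _ _ iy' iz').
by rewrite !vmulA y'y vmul1l -vmulA zz' vmul1r.
Qed.

Lemma unit_stable_Rq_qinvpt a b q :
  vmul a b = vone V -> vmul b a = vone V -> qsqnorm q != 0 ->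
  P (Rq (qinvpt q) b) <-> P (Rq q a).
Proof.
move=> ab ba q0; rewrite (Rq_qinvpt a) // lscE vmulA.
apply: unit_stable_iff; first by apply: invertible_lsc_real; rewrite invr_eq0.
by apply: invertible_mul; exists a.
Qed.

Hypothesis P1 : P (vone V).

Lemma unit_stable_sqr x : invertible x -> P (vmul x x).
Proof. by move=> ix; have := stableP _ _ _ ix ix P1; rewrite vmul1r. Qed.

Lemma unit_stable_Rq_inv a b :
  vmul a b = vone V -> vmul b a = vone V ->
  forall p, ~ P (Rq p b) <-> exists q, ~ P (Rq q a) /\ p = qinvpt q.
Proof.
move=> ab ba p; split=> [notPp | [q [notPq ->]]].
  have p0 : qsqnorm p != 0.
    apply/eqP => p0; apply: notPp; rewrite Rq_qsqnorm0 //.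
    by apply: unit_stable_sqr; exists a.
  by exists (qinvpt p); rewrite qinvptK // (unit_stable_Rq_qinvpt b).
have q0 : qsqnorm q != 0.
  apply/eqP => q0; apply: notPq; rewrite Rq_qsqnorm0 //.
  by apply: unit_stable_sqr; exists b.
by rewrite (unit_stable_Rq_qinvpt a).
Qed.

End UnitStable.
End QBanachAlgTheory.

Section Homomorphism.
Context {R : realType} {V W : QBanachAlg R} {A : V -> W}.
Hypothesis homA : is_hom A.

Lemma hom_invertible x : invertible x -> invertible (A x).
Proof.
have [_ [homM [_ [_ hom1]]]] := homA.
by move=> [y [xy yx]]; exists (A y); rewrite -!homM xy yx hom1.
Qed.

Lemma unit_stable_PhiA : unit_stable (PhiA A).
Proof.
have [_ [homM _]] := homA.
move=> x y z iy iz; rewrite /PhiA !homM => iAx.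
by do 2?apply: invertible_mul => //; apply: hom_invertible.
Qed.

Lemma PhiA1 : PhiA A (vone V).
Proof.
have [_ [_ [_ [_ hom1]]]] := homA.
by rewrite /PhiA hom1; exists (vone W); rewrite vmul1l.
Qed.

Lemma unit_stable_Phi0A : unit_stable (Phi0A A).
Proof.
have [_ [homM _]] := homA.
move=> x y z iy iz [u [w [iu [Aw0 ->]]]].
exists (vmul (vmul y u) z), (vmul (vmul y w) z); split.
  by do 2?apply: invertible_mul.
by rewrite !homM Aw0 vmulr0 vmul0r vmulDr vmulDl.
Qed.

Lemma Phi0A1 : Phi0A A (vone V).
Proof.
have [homD _] := homA.
have A0 : A (vzero V) = vzero W.
  by apply: (vaddI (A (vzero V))); rewrite -homD !vadd0.
exists (vone V), (vzero V); split; first by exists (vone V); rewrite vmul1l.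
by rewrite A0 vadd0.
Qed.

End Homomorphism.

Theorem mainTheorem2 (R : realType) (V W : QBanachAlg R)
  (HV : vone V <> vzero V) (HW : vone W <> vzero W)
  (A : V -> W) (HA : is_hom A)
  (a ainv : V) (Ha : vmul a ainv = vone V /\ vmul ainv a = vone V) :
  (forall p : quat R,
      SspecPhi A ainv p <-> exists q, SspecPhi A a q /\ p = qinvpt q) /\
  (forall p : quat R,
      SspecPhi0 A ainv p <-> exists q, SspecPhi0 A a q /\ p = qinvpt q).
Proof.
have [a_ainv ainv_a] := Ha.
split; apply: unit_stable_Rq_inv => //.
- exact: unit_stable_PhiA HA.
- exact: PhiA1 HA.
- exact: unit_stable_Phi0A HA.
- exact: Phi0A1 HA.
Qed.
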